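(* Let $G$ be a locally free group, $D$ a finitely generated subgroup of $G$ with $\mu_{G}(D)=m$, and $M$ a subgroup of $G$ such that $D\subseteq M$ and $r(M)=m$. For $g\in G\setminus M$, let $M_g=M\langle g\rangle$ be the subgroup of $G$ generated by $g$ and the elements of $M$, and let $r(M_g)=n$. If $n>m$, then $n=m+1$ and there exists a free subgroup $F_m$ of rank $m$ in $M$ such that $D\subseteq F_m$ and the subgroup $F_m\langle g\rangle$ generated by $F_m$ and $g$ is isomorphic to the free product $F_m*\langle g\rangle$.
   Context: A group is locally free if all of its finitely generated subgroups are free. For a finitely generated subgroup $H$ of a locally free group $G$, $\mu_G(H)$ is the least positive integer $m$ such that $H\subseteq F$ for some free subgroup $F$ of $G$ of rank $m$. The rank $r(G)$ of a locally free group $G$ is the maximum of $\{\mu_G(H) : H \text{ a finitely generated subgroup of } G\}$ if this maximum exists, and $r(G)=\infty$ otherwise (subgroups of $G$ are locally free, so $\mu$ and $r$ apply to them as well). *)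

From Stdlib Require Import List Arith Lia.
Import ListNotations.
Set Implicit Arguments.
Set Maximal Implicit Insertion.

Record group := Group {
  car :> Type;
  gmul : car -> car -> car;
  ginv : car -> car;
  gone : car;
  gmulA : forall x y z, gmul x (gmul y z) = gmul (gmul x y) z;
  gmul1 : forall x, gmul gone x = x;
  gmulV : forall x, gmul (ginv x) x = gone
}.

Section Defs.
Variable G : group.

Definition subset (A B : G -> Prop) := forall x, A x -> B x.

Definition is_subgroup (H : G -> Prop) :=
  H (gone G) /\ (forall x y, H x -> H y -> H (gmul G x y)) /\
  (forall x, H x -> H (ginv G x)).

Definition gen (S : G -> Prop) : G -> Prop :=
  fun x => forall H, is_subgroup H -> subset S H -> H x.

Definition same (A B : G -> Prop) := forall x, A x <-> B x.

Definition fin_gen (H : G -> Prop) :=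
  is_subgroup H /\ exists l : list G, same H (gen (fun y => In y l)).

(* words in a basis: letters (i, true) = x_i, (i, false) = x_i^-1 *)
Definition letter (l : list G) (a : nat * bool) : G :=
  if snd a then nth (fst a) l (gone G) else ginv G (nth (fst a) l (gone G)).

Definition eval_word (l : list G) (w : list (nat * bool)) : G :=
  fold_right (fun a acc => gmul G (letter l a) acc) (gone G) w.

Fixpoint reduced (w : list (nat * bool)) : Prop :=
  match w with
  | a :: ((b :: _) as w') => ~ (fst a = fst b /\ snd a <> snd b) /\ reduced w'
  | _ => True
  end.

Definition free_basis (l : list G) :=
  forall w, w <> [] -> reduced w -> (forall a, In a w -> fst a < length l) ->
    eval_word l w <> gone G.

Definition free_of_rank (F : G -> Prop) (m : nat) :=
  exists l : list G, length l = m /\ free_basis l /\ same F (gen (fun y => In y l)).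

Definition locally_free :=
  forall H, fin_gen H -> exists m, free_of_rank H m.

Definition in_free_of_rank (A H : G -> Prop) (m : nat) :=
  exists F, free_of_rank F m /\ subset F A /\ subset H F.

Definition is_mu (A H : G -> Prop) (m : nat) :=
  0 < m /\ in_free_of_rank A H m /\
  forall k, 0 < k -> k < m -> ~ in_free_of_rank A H k.

Definition rank_fin (A : G -> Prop) (n : nat) :=
  (exists H, fin_gen H /\ subset H A /\ is_mu A H n) /\
  (forall H k, fin_gen H -> subset H A -> is_mu A H k -> k <= n).

(* r(A) = r, with None standing for infinity *)
Definition rank_of (A : G -> Prop) (r : option nat) :=
  match r with
  | Some n => rank_fin A n
  | None => forall n, ~ rank_fin A n
  end.

Definition rank_gt (r : option nat) (m : nat) :=
  match r with Some n => m < n | None => True end.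

Definition join_elt (A : G -> Prop) (g : G) : G -> Prop :=
  gen (fun x => A x \/ x = g).

Definition cyclic (g : G) : G -> Prop := gen (fun x => x = g).

Fixpoint alternating (A B : G -> Prop) (s : list (bool * G)) : Prop :=
  match s with
  | [] => True
  | (t, x) :: s' =>
      (if t then A x else B x) /\ x <> gone G /\
      match s' with
      | [] => True
      | (t', _) :: _ => t <> t'
      end /\ alternating A B s'
  end.

Definition prod_seq (s : list (bool * G)) : G :=
  fold_right (fun a acc => gmul G (snd a) acc) (gone G) s.

(* the subgroup generated by A and B is (naturally) isomorphic to A * B:
   no nonempty alternating product of nontrivial elements is trivial *)
Definition gen_free_product (A B : G -> Prop) :=
  forall s, s <> [] -> alternating A B s -> prod_seq s <> gone G.

End Defs.
Arguments subset {G}. Arguments is_subgroup {G}. Arguments gen {G}. Arguments same {G}.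
Arguments fin_gen {G}. Arguments is_mu {G}. Arguments rank_of {G}. Arguments rank_fin {G}.
Arguments free_of_rank {G}. Arguments in_free_of_rank {G}. Arguments join_elt {G}. Arguments cyclic {G}.
Arguments gen_free_product {G}. Arguments free_basis {G}. Arguments alternating {G}.

(* Every finitely generated subgroup of M<g> lies in <F, g> for a free subgroup
   F <= M of rank m containing D: the bound r(M) = m caps the rank of F and
   mu_G(D) = m keeps it from being smaller.  By local freeness <F, g> is free, and
   being generated by a basis of F together with g it has rank at most m + 1; hence
   r(M<g>) <= m + 1.  If the rank m + 1 is attained, these m + 1 generators form a
   free basis because free groups of finite rank are Hopfian, and that is precisely
   the statement <F, g> = F * <g>.  Both facts about free groups (a generating set
   has at least rank-many elements, and one of exactly that size is a basis) come
   from counting tuples of permutations, using that a reduced word acts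
   nontrivially in a suitable symmetric group. *)

From Pilot Require Import Defs.
From Stdlib Require Import List Arith Lia Classical.
From mathcomp Require all_boot all_fingroup.
Import ListNotations.

Section GroupLaws.
Variable G : group.

Lemma gmulrV (x : G) : gmul G x (ginv G x) = gone G.
Proof.
  set (y := ginv G x).
  transitivity (gmul G (gmul G (ginv G y) y) (gmul G x y)).
  { rewrite gmulV, gmul1. reflexivity. }
  rewrite <- gmulA, (gmulA G y x y). unfold y at 2. rewrite gmulV, gmul1. apply gmulV.
Qed.

Lemma gmulr1 (x : G) : gmul G x (gone G) = x.
Proof. rewrite <- (gmulV G x), gmulA, gmulrV. apply gmul1. Qed.

Lemma ginv_uniq (x y : G) : gmul G x y = gone G -> y = ginv G x.
Proof.
  intros E. rewrite <- (gmul1 G y), <- (gmulV G x), <- gmulA, E. apply gmulr1.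
Qed.

Lemma ginvK (x : G) : ginv G (ginv G x) = x.
Proof. symmetry. apply ginv_uniq, gmulV. Qed.

Lemma ginvM (x y : G) : ginv G (gmul G x y) = gmul G (ginv G y) (ginv G x).
Proof.
  symmetry. apply ginv_uniq.
  rewrite gmulA, <- (gmulA G x y), gmulrV, gmulr1. apply gmulrV.
Qed.

Lemma ginv1 : ginv G (gone G) = gone G.
Proof. symmetry. apply ginv_uniq, gmul1. Qed.

Lemma gmul_eq1 (x y : G) : gmul G x (ginv G y) = gone G -> x = y.
Proof. intros E. apply ginv_uniq in E. rewrite <- (ginvK x), <- E. apply ginvK. Qed.

End GroupLaws.

Notation gen_list l := (gen (fun y => In y l)).

Section Generation.
Variable G : group.
Implicit Types S A B F : G -> Prop.

Lemma gen_subgroup S : is_subgroup (gen S).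
Proof.
  split; [|split].
  - intros H [H1 _] _. exact H1.
  - intros x y Hx Hy H HH HS. apply HH; [apply Hx | apply Hy]; assumption.
  - intros x Hx H HH HS. apply HH, Hx; assumption.
Qed.

Lemma gen_mem S x : S x -> gen S x.
Proof. intros Sx H _ HS. apply HS, Sx. Qed.

Lemma gen_least S A : is_subgroup A -> subset S A -> subset (gen S) A.
Proof. intros HA HS x Hx. apply Hx; assumption. Qed.

Lemma gen_mono S S' : subset S S' -> subset (gen S) (gen S').
Proof.
  intros HS. apply gen_least; [apply gen_subgroup|].
  intros x Sx. apply gen_mem, HS, Sx.
Qed.

Lemma subgroup1 A : is_subgroup A -> A (gone G).
Proof. intros [H1 _]. exact H1. Qed.

Lemma same_subgroup A B : same A B -> is_subgroup B -> is_subgroup A.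
Proof.
  intros E [H1 [HM HV]]. split; [|split].
  - apply E, H1.
  - intros x y Hx Hy. apply E, HM; apply E; assumption.
  - intros x Hx. apply E, HV, E, Hx.
Qed.

Lemma free_of_rank_subgroup F m : free_of_rank F m -> is_subgroup F.
Proof. intros [l [_ [_ E]]]. apply (same_subgroup _ _ E), gen_subgroup. Qed.

Lemma gen_nil x : gen_list [] x -> x = gone G.
Proof.
  apply (gen_least _ (fun y => y = gone G)); [|intros y []].
  split; [|split]; [reflexivity| |].
  - intros x1 x2 -> ->. apply gmul1.
  - intros x1 ->. apply ginv1.
Qed.

End Generation.

Notation word := (list (nat * bool)).

Definition word_over (n : nat) (w : word) := forall a, In a w -> fst a < n.

Definition flip (a : nat * bool) := (fst a, negb (snd a)).

Definition inv_word (w : word) : word := rev (map flip w).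

Definition cancels (a b : nat * bool) := fst a = fst b /\ snd a <> snd b.

Lemma cancels_dec a b : {cancels a b} + {~ cancels a b}.
Proof.
  destruct a as [i s], b as [j t]; unfold cancels; simpl.
  destruct (Nat.eq_dec i j), (Bool.bool_dec s t); [right | left | right | right]; tauto.
Qed.

Fixpoint reduce (w : word) : word :=
  match w with
  | [] => []
  | a :: w' =>
      match reduce w' with
      | b :: w'' => if cancels_dec a b then w'' else a :: b :: w''
      | [] => [a]
      end
  end.

Definition eval_words (X : group) (l : list X) (us : list word) : list X :=
  map (eval_word X l) us.

Definition wsubst (us : list word) (w : word) : word :=
  flat_map (fun a : nat * bool => if snd a then nth (fst a) us [] else inv_word (nth (fst a) us [])) w.

Lemma reduce_reduced w : reduced (reduce w).
Proof.
  induction w as [|a w IH]; simpl; auto.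
  destruct (reduce w) as [|b w'']; simpl; auto.
  destruct (cancels_dec a b) as [_|Hab].
  - destruct w'' as [|c w3]; simpl in *; tauto.
  - split; assumption.
Qed.

Lemma reduce_incl w : incl (reduce w) w.
Proof.
  induction w as [|a w IH]; simpl; [apply incl_refl|].
  destruct (reduce w) as [|b w'']; [intros x [<- | []]; left; reflexivity|].
  destruct (cancels_dec a b); intros x Hx.
  - right. apply IH. right. exact Hx.
  - destruct Hx as [<- | Hx]; [left; reflexivity | right; apply IH, Hx].
Qed.

Lemma word_over_app n w1 w2 : word_over n w1 -> word_over n w2 -> word_over n (w1 ++ w2).
Proof. intros H1 H2 a Ha. apply in_app_or in Ha. destruct Ha; auto. Qed.

Lemma word_over_inv n w : word_over n w -> word_over n (inv_word w).
Proof.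
  intros H a Ha. apply in_rev, in_map_iff in Ha.
  destruct Ha as [b [<- Hb]]. exact (H b Hb).
Qed.

Lemma word_over_nth n us i : (forall u, In u us -> word_over n u) -> word_over n (nth i us []).
Proof.
  intros H. destruct (Nat.lt_ge_cases i (length us)).
  - apply H, nth_In. assumption.
  - rewrite nth_overflow by assumption. intros a [].
Qed.

Lemma word_over_wsubst n us w :
  (forall u, In u us -> word_over n u) -> word_over n (wsubst us w).
Proof.
  intros H. induction w as [|a w IH]; [intros x []|].
  apply word_over_app; [|exact IH].
  destruct (snd a); [|apply word_over_inv]; apply word_over_nth, H.
Qed.

Section Evaluation.
Variable X : group.
Implicit Type l : list X.

Lemma eval_word_app l w1 w2 :
  eval_word X l (w1 ++ w2) = gmul X (eval_word X l w1) (eval_word X l w2).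
Proof.
  induction w1 as [|a w IH]; simpl; [symmetry; apply gmul1|].
  rewrite IH. apply gmulA.
Qed.

Lemma eval_word_letter l i : eval_word X l [(i, true)] = nth i l (gone X).
Proof. apply gmulr1. Qed.

Lemma letter_flip l a : letter X l (flip a) = ginv X (letter X l a).
Proof. destruct a as [i []]; unfold letter; simpl; [reflexivity | symmetry; apply ginvK]. Qed.

Lemma eval_word_inv l w : eval_word X l (inv_word w) = ginv X (eval_word X l w).
Proof.
  induction w as [|a w IH]; unfold inv_word in *; simpl; [symmetry; apply ginv1|].
  rewrite eval_word_app, IH, ginvM. simpl. rewrite letter_flip, gmulr1. reflexivity.
Qed.

Lemma letter_cancels l a b : cancels a b -> gmul X (letter X l a) (letter X l b) = gone X.
Proof.
  destruct a as [i []], b as [j []]; unfold cancels, letter; simpl; intros [<- N];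
    try (exfalso; now apply N).
  - apply gmulrV.
  - apply gmulV.
Qed.

Lemma eval_word_reduce l w : eval_word X l (reduce w) = eval_word X l w.
Proof.
  induction w as [|a w IH]; simpl; [reflexivity|].
  rewrite <- IH. destruct (reduce w) as [|b w'']; simpl; [reflexivity|].
  destruct (cancels_dec a b) as [Hab|]; simpl; [|reflexivity].
  rewrite gmulA, letter_cancels by exact Hab. symmetry. apply gmul1.
Qed.

Lemma eval_wsubst l us w :
  eval_word X l (wsubst us w) = eval_word X (eval_words X l us) w.
Proof.
  induction w as [|a w IH]; simpl; [reflexivity|].
  rewrite eval_word_app, IH. f_equal. unfold letter, eval_words.
  change (gone X) with (eval_word X l []). rewrite map_nth.
  destruct (snd a); [reflexivity | apply eval_word_inv].
Qed.

Lemma gen_word l x : gen_list l x ->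
  exists w, word_over (length l) w /\ eval_word X l w = x.
Proof.
  intros Hx. apply Hx; [split; [|split] |].
  - exists []. split; [intros a [] | reflexivity].
  - intros x1 x2 [w1 [B1 <-]] [w2 [B2 <-]]. exists (w1 ++ w2).
    split; [apply word_over_app; assumption | apply eval_word_app].
  - intros x1 [w1 [B1 <-]]. exists (inv_word w1).
    split; [apply word_over_inv; assumption | apply eval_word_inv].
  - intros y Hy. destruct (In_nth l y (gone X) Hy) as [i [Hi <-]].
    exists [(i, true)]. split; [intros c [<- | []]; exact Hi | apply eval_word_letter].
Qed.

Lemma gen_reduced_word l x : gen_list l x ->
  exists w, word_over (length l) w /\ reduced w /\ eval_word X l w = x.
Proof.
  intros Hx. destruct (gen_word l x Hx) as [w [B <-]].
  exists (reduce w). split; [|split].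
  - intros a Ha. apply B, reduce_incl, Ha.
  - apply reduce_reduced.
  - apply eval_word_reduce.
Qed.

Lemma gen_words l y : (forall x, In x y -> gen_list l x) ->
  exists us, eval_words X l us = y /\ forall u, In u us -> word_over (length l) u.
Proof.
  induction y as [|x y IH]; intros H.
  - exists []. split; [reflexivity | intros u []].
  - destruct IH as [us [E B]]; [intros z Hz; apply H; right; exact Hz|].
    destruct (gen_word l x) as [w [Bw Ew]]; [apply H; left; reflexivity|].
    exists (w :: us). split; [unfold eval_words in *; simpl; rewrite E, Ew; reflexivity|].
    intros u [<- | Hu]; auto.
Qed.

End Evaluation.

Lemma free_basis_reduce_nil (G : group) (b : list G) w :
  free_basis b -> word_over (length b) w -> eval_word G b w = gone G -> reduce w = [].
Proof.
  intros Hf Hb He. destruct (reduce w) as [|c w'] eqn:E; [reflexivity|]. exfalso.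
  apply (Hf (c :: w')); [discriminate | | |].
  - rewrite <- E. apply reduce_reduced.
  - intros a Ha. apply Hb, reduce_incl. rewrite E. exact Ha.
  - rewrite <- E, eval_word_reduce. exact He.
Qed.

Lemma free_basis_word_eq (G : group) (b : list G) w1 w2 (X : group) (a : list X) :
  free_basis b -> word_over (length b) w1 -> word_over (length b) w2 ->
  eval_word G b w1 = eval_word G b w2 -> eval_word X a w1 = eval_word X a w2.
Proof.
  intros Hf H1 H2 E.
  assert (Hnil : reduce (w1 ++ inv_word w2) = []).
  { apply (free_basis_reduce_nil G b); [exact Hf | |].
    - apply word_over_app, word_over_inv; assumption.
    - rewrite eval_word_app, eval_word_inv, E. apply gmulrV. }
  apply gmul_eq1. rewrite <- eval_word_inv, <- eval_word_app, <- eval_word_reduce, Hnil.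
  reflexivity.
Qed.

Lemma eval_words_cancel (G : group) (b y : list G) us vs (X : group) (a : list X) :
  free_basis b -> eval_words G b us = y -> (forall u, In u us -> word_over (length b) u) ->
  eval_words G y vs = b -> length a = length b ->
  eval_words X (eval_words X a us) vs = a.
Proof.
  intros Hf Hus Bus Hvs Ha.
  assert (Hlen : length vs = length b)
    by (rewrite <- Hvs; unfold eval_words; symmetry; apply length_map).
  apply (nth_ext _ _ (gone X) (gone X)); [unfold eval_words; rewrite length_map; congruence|].
  intros k Hk. unfold eval_words in Hk. rewrite length_map in Hk.
  unfold eval_words at 1. change (gone X) with (eval_word X (eval_words X a us) []) at 1.
  rewrite map_nth, <- eval_wsubst, <- eval_word_letter.
  apply (free_basis_word_eq G b); [exact Hf | | |].
  - apply word_over_wsubst, Bus.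
  - intros c [<- | []]. simpl. rewrite <- Hlen. exact Hk.
  - rewrite eval_wsubst, Hus, eval_word_letter, <- Hvs. unfold eval_words.
    change (gone G) with (eval_word G y []). rewrite map_nth. reflexivity.
Qed.

Module PermWords.
Import all_boot all_fingroup.

Definition perm_group (N : nat) : Defs.group :=
  @Defs.Group {perm 'I_N} (fun x y => (x * y)%g) (fun x => (x^-1)%g) 1%g
    (@mulgA _) (@mul1g _) (@mulVg _).

Lemma size_length (T : Type) (l : list T) : size l = length l.
Proof. by elim: l => //= x l ->. Qed.

Section TupleRetraction.
Variables (T : finType) (j k : nat) (f g : list T -> list T).
Hypothesis length_f : forall a, length a = j -> length (f a) = k.
Hypothesis fK : forall a, length a = j -> g (f a) = a.

Let ft_size (t : j.-tuple T) : size (f t) == k.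
Proof. by rewrite size_length length_f // -size_length size_tuple. Qed.

Let ft (t : j.-tuple T) : k.-tuple T := Tuple (ft_size t).

Let ftE t : val (ft t) = f t.
Proof. by []. Qed.

Let ft_inj : injective ft.
Proof.
  move=> t1 t2 E. apply: val_inj; change (tval t1 = tval t2).
  have L (t : j.-tuple T) : length t = j by rewrite -size_length size_tuple.
  have E' : f t1 = f t2 by rewrite -!ftE E.
  by rewrite -(fK _ (L t1)) E' fK.
Qed.

Lemma card_exp_le_of_retraction : #|T| ^ j <= #|T| ^ k.
Proof. rewrite -!card_tuple. exact: leq_card ft_inj. Qed.

Lemma retraction_surj : j = k -> forall q, length q = k -> exists a, length a = j /\ f a = q.
Proof.
  move=> ejk q Hq. subst k.
  have [h _ hK] := injF_bij ft_inj.
  have Hqs : size q == j by rewrite size_length Hq.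
  exists (val (h (Tuple Hqs))). split; first by rewrite -size_length size_tuple.
  by rewrite -ftE hK.
Qed.

End TupleRetraction.

Lemma inord_inj K x y : x <= K -> y <= K -> (inord x : 'I_K.+1) = inord y -> x = y.
Proof. move=> hx hy /(congr1 (@nat_of_ord _)). by rewrite !inordK. Qed.

Lemma perm_extend K (ps : list (nat * nat)) :
  (forall p, In p ps -> p.1 <= K /\ p.2 <= K) ->
  (forall p p', In p ps -> In p' ps -> (p.1 = p'.1 <-> p.2 = p'.2)) ->
  exists s : {perm 'I_K.+1}, forall p, In p ps -> s (inord p.1) = inord p.2.
Proof.
  elim: ps => [|[a b] ps IH] Hb Hc; first by exists 1%g => p [].
  have [s Hs] : exists s : {perm 'I_K.+1}, forall p, In p ps -> s (inord p.1) = inord p.2.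
    apply: IH => [p Hp|p p' Hp Hp']; [apply: Hb|apply: Hc]; by right.
  case: (classic (exists p', In p' ps /\ p'.1 = a)) => [[p' [Hp' Ea]]|Hn].
    exists s => p [<-|Hp] /=; last exact: Hs.
    have [/= H1 _] := Hc (a, b) p' (or_introl erefl) (or_intror Hp').
    by rewrite -Ea Hs // -H1 // Ea.
  have [/= ha hb] := Hb (a, b) (or_introl erefl).
  exists (s * tperm (s (inord a)) (inord b))%g => p [<-|Hp] /=.
    by rewrite permM tpermL.
  have [hp1 hp2] := Hb p (or_intror Hp).
  rewrite permM Hs // tpermD //.
    apply/eqP; rewrite -Hs // => /perm_inj /inord_inj E.
    by apply: Hn; exists p; split => //; rewrite E.
  apply/eqP => /(@inord_inj _ _ _ hb hp2) E.
  have [/= _ H2] := Hc (a, b) p (or_introl erefl) (or_intror Hp).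
  by apply: Hn; exists p; split => //; rewrite H2.
Qed.

Lemma reduced_nth_cancels (w : word) i d : reduced w -> i.+1 < length w ->
  ~ cancels (List.nth i w d) (List.nth i.+1 w d).
Proof.
  elim: w i => [|a [|b w] IH] // [|i] /= [Hab Hr] Hi //.
  exact: IH.
Qed.

(* The letter [x_i] must map [k] to [k.+1] (or back) at each position [k] of [w]
   carrying [x_i] (or its inverse). *)
Definition letter_moves (w : word) (i : nat) : list (nat * nat) :=
  flat_map (fun k => let a := List.nth k w (0, true) in
     if fst a == i then [:: if snd a then (k, k.+1) else (k.+1, k)] else [::])
   (List.seq 0 (length w)).

Lemma letter_movesP w i p : In p (letter_moves w i) -> exists k, k < length w /\
  fst (List.nth k w (0, true)) = i /\
  p = (if snd (List.nth k w (0, true)) then (k, k.+1) else (k.+1, k)).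
Proof.
  rewrite /letter_moves in_flat_map => -[k [/in_seq Hk Hp]].
  exists k. split; first by apply/ltP; lia.
  by move: Hp; case: eqP => // E [<-|[]].
Qed.

Lemma letter_moves_nth w k : k < length w ->
  In (if snd (List.nth k w (0, true)) then (k, k.+1) else (k.+1, k))
     (letter_moves w (fst (List.nth k w (0, true)))).
Proof.
  move=> /ltP Hk. rewrite /letter_moves in_flat_map. exists k.
  by split; [apply in_seq; lia | rewrite eqxx; left].
Qed.

Lemma list_choice (A : Type) (d : A) (P : nat -> A -> Prop) n :
  (forall i, exists x, P i x) ->
  exists q, length q = n /\ forall i, i < n -> P i (List.nth i q d).
Proof.
  move=> H. elim: n => [|n [q [Lq Hq]]]; first by exists [::].
  have [x Hx] := H n. exists (q ++ [:: x]). split; first by rewrite length_app Lq /=; lia.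
  move=> i; rewrite ltnS leq_eqVlt => /orP[/eqP->|Hi].
    by rewrite app_nth2 Lq ?Nat.sub_diag //; apply/leP.
  by rewrite app_nth1; [apply: Hq | apply/ltP; rewrite Lq].
Qed.

Section ReducedWordWalk.
Variables (w : word) (n : nat).
Hypotheses (w_reduced : reduced w) (w_over : word_over n w).
Let L := length w.

Lemma letter_moves_injective i p p' : In p (letter_moves w i) -> In p' (letter_moves w i) ->
  (p.1 = p'.1 <-> p.2 = p'.2).
Proof.
  move=> /letter_movesP [k [Hk [Ei ->]]] /letter_movesP [k' [Hk' [Ei' ->]]].
  have Hadj k1 k2 : k1 < L -> k2 < L -> k2 = k1.+1 ->
      fst (List.nth k1 w (0, true)) = fst (List.nth k2 w (0, true)) ->
      snd (List.nth k1 w (0, true)) = snd (List.nth k2 w (0, true)).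
    move=> h1 h2 e12 ef; subst k2.
    have := @reduced_nth_cancels w k1 (0, true) w_reduced h2. rewrite /cancels.
    by case: (snd _); case: (snd _) => //; tauto.
  case E1: (snd _); case E2: (snd _) => /=; split => H; try lia; exfalso;
    first [ have X := Hadj k' k Hk' Hk ltac:(lia) (etrans Ei' (esym Ei))
          | have X := Hadj k k' Hk Hk' ltac:(lia) (etrans Ei (esym Ei')) ];
    by rewrite E1 E2 in X.
Qed.

Lemma walk_perms : exists q : list (perm_group L.+1), length q = n /\
  forall k, k < L -> letter (perm_group L.+1) q (List.nth k w (0, true)) (inord k) = inord k.+1.
Proof.
  have Hsig i : exists s : {perm 'I_L.+1},
      forall p, In p (letter_moves w i) -> s (inord p.1) = inord p.2.
    apply: perm_extend; last exact: letter_moves_injective.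
    move=> p /letter_movesP [k [Hk [_ ->]]]. by case: ifP => _ /=; split => //; exact: ltnW.
  have [q [Lq Hq]] := @list_choice _ 1%g _ n Hsig.
  exists q. split => // k Hk.
  have Hi : fst (List.nth k w (0, true)) < n by apply/ltP; apply/w_over/nth_In/ltP.
  have := Hq _ Hi _ (@letter_moves_nth w k Hk).
  rewrite /letter. case: (snd _) => //= Hs.
  by rewrite -Hs permK.
Qed.

Lemma reduced_word_perm_nontrivial : w <> [::] ->
  exists N (q : list (perm_group N)), length q = n /\
    eval_word (perm_group N) q w <> gone (perm_group N).
Proof.
  move=> Hne. have [q [Lq Hstep]] := walk_perms.
  exists L.+1, q. split => //.
  have Hwalk w2 w1 : app w1 w2 = w ->
      eval_word (perm_group L.+1) q w2 (inord (length w1)) = inord L.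
    elim: w2 w1 => [|a w2 IH] w1 E.
      by rewrite app_nil_r in E; rewrite /= perm1 /L E.
    have Hk : length w1 < L by rewrite /L -E length_app /=; apply/ltP; lia.
    have Ha : List.nth (length w1) w (0, true) = a by rewrite -E nth_middle.
    rewrite /= permM -{1}Ha Hstep //.
    have -> : (length w1).+1 = length (app w1 [:: a]) by rewrite length_app /=; lia.
    by apply: IH; rewrite -app_assoc.
  move=> E1. have := Hwalk w [::] erefl. rewrite E1 /= perm1.
  move=> /(@inord_inj _ _ _ (leq0n _) (leqnn _)) /esym /length_zero_iff_nil.
  exact: Hne.
Qed.

End ReducedWordWalk.

Section FreeBasisChange.
Variables (G : Defs.group) (b y : list G).
Hypotheses (b_free : free_basis b)
  (y_in_b : forall x, In x y -> gen_list b x)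
  (b_in_y : forall x, In x b -> gen_list y x).

(* Substituting [us] injects [S_2^|b|] into [S_2^|y|], as substituting [vs] undoes it. *)
Lemma free_basis_length_le : (length b <= length y)%coq_nat.
Proof.
  have [us [Eus Bus]] := gen_words G b y y_in_b.
  have [vs [Evs Bvs]] := gen_words G y b b_in_y.
  have := @card_exp_le_of_retraction {perm 'I_2} (length b) (length y)
    (fun a => eval_words (perm_group 2) a us) (fun c => eval_words (perm_group 2) c vs).
  rewrite card_Sn leq_exp2l // => H. apply/leP; apply: H.
    by move=> a _; rewrite length_map -Eus length_map.
  by move=> a Ha; apply: (eval_words_cancel G b y us vs (perm_group 2) a).
Qed.

(* Free groups of finite rank are Hopfian: a word trivial on [y] pulls back, through
   a tuple of permutations given by surjectivity, to a relation on [b]. *)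
Lemma free_basis_of_length_eq : length b = length y -> free_basis y.
Proof.
  move=> Hl w Hne Hr Hbw Hev.
  have [us [Eus Bus]] := gen_words G b y y_in_b.
  have [vs [Evs Bvs]] := gen_words G y b b_in_y.
  have [N [q [Lq Hq]]] := @reduced_word_perm_nontrivial w (length y) Hr Hbw Hne.
  have [a [La Ea]] := @retraction_surj {perm 'I_N} (length b) (length y)
    (fun a => eval_words (perm_group N) a us) (fun c => eval_words (perm_group N) c vs)
    ltac:(by move=> a _; rewrite length_map -Eus length_map)
    ltac:(by move=> a Ha; apply: (eval_words_cancel G b y us vs (perm_group N) a))
    Hl q Lq.
  apply: Hq. rewrite -Ea -eval_wsubst.
  have -> : eval_word (perm_group N) a (wsubst us w) = eval_word (perm_group N) a [::].
    apply: (free_basis_word_eq G b) => //; first exact: word_over_wsubst.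
    by rewrite eval_wsubst Eus Hev.
  by [].
Qed.

End FreeBasisChange.

End PermWords.

Section MuAndRank.
Variable G : group.
Implicit Types A H K F : G -> Prop.

Lemma in_free_of_rank_mono A A' H k :
  subset A A' -> in_free_of_rank A H k -> in_free_of_rank A' H k.
Proof.
  intros HA [F [HF [HFA HHF]]]. exists F.
  split; [exact HF | split; intros x Hx; auto].
Qed.

Lemma ex_minimal_nat (P : nat -> Prop) :
  (exists n, P n) -> exists n, P n /\ forall k, k < n -> ~ P k.
Proof.
  intros [n Pn]. induction n as [n IH] using lt_wf_ind.
  destruct (classic (exists k, k < n /\ P k)) as [[k [Hk Pk]] | Hno].
  - exact (IH k Hk Pk).
  - exists n. split; [exact Pn|]. intros k Hk Pk. apply Hno. eauto.
Qed.

(* A trivial [H] is contained in any free subgroup of [A], whence the hypothesis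
   on [F]. *)
Lemma is_mu_exists A H F k0 : locally_free G -> fin_gen H -> subset H A ->
  0 < k0 -> free_of_rank F k0 -> subset F A -> exists k, is_mu A H k.
Proof.
  intros LF HH HHA Hk0 HF HFA.
  assert (Hex : exists k, 0 < k /\ in_free_of_rank A H k).
  { destruct (LF H HH) as [[|j] Hj].
    - exists k0. split; [exact Hk0|]. exists F. split; [|split]; auto.
      destruct Hj as [[|? ?] [Hl [_ E]]]; [|discriminate].
      intros x Hx. apply E, gen_nil in Hx. subst x.
      apply subgroup1, (free_of_rank_subgroup _ _ _ HF).
    - exists (S j). split; [lia|]. exists H. split; [|split]; auto. intros x; auto. }
  destruct (ex_minimal_nat _ Hex) as [k [[Hk HkH] Hmin]].
  exists k. split; [|split]; auto.
  intros k' Hk' Hlt Hin. apply (Hmin k'); auto.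
Qed.

Lemma is_mu_le A H k j : is_mu A H k -> 0 < j -> in_free_of_rank A H j -> k <= j.
Proof.
  intros [_ [_ Hmin]] Hj Hin. destruct (Nat.le_gt_cases k j) as [|Hlt]; [assumption|].
  exfalso. exact (Hmin j Hj Hlt Hin).
Qed.

Lemma is_mu_restrict A H m :
  is_mu (fun _ => True) H m -> in_free_of_rank A H m -> is_mu A H m.
Proof.
  intros [Hm [_ Hmin]] Hin. split; [|split]; [assumption | assumption|].
  intros k Hk Hlt HkA. apply (Hmin k Hk Hlt).
  apply (in_free_of_rank_mono A); [intros x _; exact I | exact HkA].
Qed.

Lemma rank_gt_witness A r m : rank_of A r -> rank_gt r m ->
  (exists H, fin_gen H /\ subset H A /\ is_mu A H m) ->
  exists H k, fin_gen H /\ subset H A /\ is_mu A H k /\ m < k.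
Proof.
  intros Hr Hgt Hwit. destruct r as [n|].
  - destruct Hr as [[H [HH [HHA Hmu]]] _]. exists H, n. auto.
  - apply NNPP. intros Hno. apply (Hr m). split; [exact Hwit|].
    intros H k HH HHA Hmu. apply not_lt. intros Hlt. apply Hno. exists H, k. auto.
Qed.

Lemma rank_of_max A r n : rank_of A r ->
  (forall H k, fin_gen H -> subset H A -> is_mu A H k -> k <= n) ->
  (exists H, fin_gen H /\ subset H A /\ is_mu A H n) -> r = Some n.
Proof.
  intros Hr Hle Hwit. destruct r as [n'|].
  - destruct Hr as [[H' [HH' [HHA' Hmu']]] Hle'].
    destruct Hwit as [H [HH [HHA Hmu]]].
    f_equal. apply Nat.le_antisymm; [exact (Hle _ _ HH' HHA' Hmu') | exact (Hle' _ _ HH HHA Hmu)].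
  - exfalso. apply (Hr n). split; assumption.
Qed.

End MuAndRank.

Section JoinGeneration.
Variable G : group.

Lemma gen_list_app_l (l l' : list G) : subset (gen_list l) (gen_list (l ++ l')).
Proof. apply gen_mono. intros y Hy. apply in_or_app. left. exact Hy. Qed.

Lemma gen_list_app_r (l l' : list G) : subset (gen_list l') (gen_list (l ++ l')).
Proof. apply gen_mono. intros y Hy. apply in_or_app. right. exact Hy. Qed.

(* The elements with such a finite support form a subgroup containing [S] and [g]. *)
Lemma join_elt_fin_support (S : G -> Prop) g x : join_elt S g x ->
  exists K, (forall k, In k K -> S k) /\ join_elt (fun y => In y K) g x.
Proof.
  intros Hx. apply Hx; [split; [|split] |].
  - exists []. split; [intros k [] | apply subgroup1, gen_subgroup].
  - intros x1 x2 [K1 [S1 G1]] [K2 [S2 G2]]. exists (K1 ++ K2). split.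
    + intros k Hk. apply in_app_or in Hk. destruct Hk; auto.
    + apply gen_subgroup; [revert G1 | revert G2]; apply gen_mono;
        intros y [Hy|Hy]; auto; left; apply in_or_app; auto.
  - intros x1 [K1 [S1 G1]]. exists K1. split; [exact S1 | apply gen_subgroup, G1].
  - intros y [Hy | ->].
    + exists [y]. split; [intros k [<- | []]; exact Hy | apply gen_mem; left; left; reflexivity].
    + exists []. split; [intros k [] | apply gen_mem; right; reflexivity].
Qed.

Lemma join_elt_fin_support_list (S : G -> Prop) g (hl : list G) :
  (forall x, In x hl -> join_elt S g x) ->
  exists K, (forall k, In k K -> S k) /\ forall x, In x hl -> join_elt (fun y => In y K) g x.
Proof.
  induction hl as [|h hl IH]; intros H.
  - exists []. split; intros k [].
  - destruct IH as [K1 [S1 G1]]; [intros x Hx; apply H; right; exact Hx|].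
    destruct (join_elt_fin_support S g h) as [K2 [S2 G2]]; [apply H; left; reflexivity|].
    exists (K1 ++ K2). split.
    + intros k Hk. apply in_app_or in Hk. destruct Hk; auto.
    + intros x Hx. assert (Hx' : join_elt (fun y => In y K1) g x \/ join_elt (fun y => In y K2) g x)
        by (destruct Hx as [<- | Hx]; auto).
      destruct Hx' as [Hx' | Hx']; revert Hx'; apply gen_mono;
        intros y [Hy|Hy]; auto; left; apply in_or_app; auto.
Qed.

Lemma locally_free_gen_list (l : list G) : locally_free G ->
  exists b, free_basis b /\ same (gen_list b) (gen_list l) /\
    length b <= length l /\ (length b = length l -> free_basis l).
Proof.
  intros LF. assert (Hfg : fin_gen (gen_list l)).
  { split; [apply gen_subgroup | exists l; intros x; tauto]. }
  destruct (LF _ Hfg) as [j [b [_ [Hb E]]]].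
  assert (Hlb : forall x, In x l -> gen_list b x) by (intros x Hx; apply (proj1 (E x)), gen_mem, Hx).
  assert (Hbl : forall x, In x b -> gen_list l x) by (intros x Hx; apply (proj2 (E x)), gen_mem, Hx).
  exists b. split; [|split; [|split]].
  - exact Hb.
  - intros x. symmetry. apply E.
  - apply (PermWords.free_basis_length_le G b l); assumption.
  - apply (PermWords.free_basis_of_length_eq G b l); assumption.
Qed.

End JoinGeneration.

Section Extension.
Variables (G : group) (D M : G -> Prop) (m : nat) (g : G).
Hypotheses (LF : locally_free G) (HD : fin_gen D) (Hmu : is_mu (fun _ => True) D m)
  (HM : is_subgroup M) (HDM : subset D M) (HrM : rank_of M (Some m)) (Hg : ~ M g).

(* The free hull of [D] and [K] inside [M] has rank at most [r(M) = m], and at least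
   [mu_G(D) = m]. *)
Lemma fin_subset_in_free (K : list G) : (forall k, In k K -> M k) ->
  exists l, length l = m /\ free_basis l /\ subset (gen_list l) M /\
    subset D (gen_list l) /\ forall k, In k K -> gen_list l k.
Proof.
  intros HK. destruct HD as [_ [dl Hdl]].
  set (H := gen_list (K ++ dl)).
  assert (HHM : subset H M).
  { apply gen_least; [exact HM|]. intros y Hy. apply in_app_or in Hy.
    destruct Hy as [Hy|Hy]; [exact (HK y Hy) | apply HDM, Hdl, gen_mem, Hy]. }
  assert (HHfg : fin_gen H) by (split; [apply gen_subgroup | exists (K ++ dl); intros x; tauto]).
  assert (HDH : subset D H) by (intros x Hx; apply gen_list_app_r, Hdl, Hx).
  destruct HrM as [[H0 [_ [_ [Hm0 [[F0 [HF0 [HF0M _]]] _]]]]] Hbound].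
  destruct (is_mu_exists G M H F0 m LF HHfg HHM Hm0 HF0 HF0M) as [k Hk].
  pose proof (Hbound H k HHfg HHM Hk) as Hkm.
  destruct Hk as [Hk0 [[F [[l [Hl [Hfl EF]]] [HFM HHF]]] _]].
  assert (Hmk : m <= k).
  { apply (is_mu_le G (fun _ => True) D); [exact Hmu | exact Hk0|].
    exists F. split; [exists l; auto | split; [intros x _; exact I | intros x Hx; auto]]. }
  exists l. split; [lia|split; [exact Hfl|split; [|split]]].
  - intros x Hx. apply HFM, EF, Hx.
  - intros x Hx. apply EF, HHF, HDH, Hx.
  - intros x Hx. apply EF, HHF, gen_list_app_l, gen_mem, Hx.
Qed.

Lemma gen_list_join (l : list G) : subset (gen_list l) M ->
  subset (gen_list (l ++ [g])) (join_elt M g).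
Proof.
  intros HlM. apply gen_least; [apply gen_subgroup|]. intros y Hy.
  apply in_app_or in Hy. destruct Hy as [Hy | [<- | []]]; apply gen_mem.
  - left. apply HlM, gen_mem, Hy.
  - right. reflexivity.
Qed.

Lemma fin_gen_join_in_free (H : G -> Prop) : fin_gen H -> subset H (join_elt M g) ->
  exists l, length l = m /\ free_basis l /\ subset (gen_list l) M /\
    subset D (gen_list l) /\ subset H (gen_list (l ++ [g])).
Proof.
  intros [_ [hl Hhl]] HHM.
  destruct (join_elt_fin_support_list G M g hl) as [K [HKM HK]].
  { intros x Hx. apply HHM, Hhl, gen_mem, Hx. }
  destruct (fin_subset_in_free K HKM) as [l [Hl [Hfl [HlM [HDl HKl]]]]].
  exists l. split; [exact Hl | split; [exact Hfl | split; [exact HlM | split; [exact HDl|]]]].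
  intros x Hx. apply Hhl in Hx. revert x Hx.
  apply gen_least; [apply gen_subgroup|]. intros y Hy. apply HK in Hy. revert y Hy.
  apply gen_least; [apply gen_subgroup|]. intros y [Hy | ->].
  - apply gen_list_app_l, HKl, Hy.
  - apply gen_list_app_r, gen_mem. left. reflexivity.
Qed.

Lemma mu_join_bound (H : G -> Prop) k : fin_gen H -> subset H (join_elt M g) ->
  is_mu (join_elt M g) H k ->
  k <= S m /\ (k = S m -> exists l, length l = m /\ subset (gen_list l) M /\
                          subset D (gen_list l) /\ free_basis (l ++ [g])).
Proof.
  intros HHfg HHM Hk.
  destruct (fin_gen_join_in_free H HHfg HHM) as [l [Hl [_ [HlM [HDl HHl]]]]].
  destruct (locally_free_gen_list G (l ++ [g]) LF) as [b [Hb [Eb [Hble Hbeq]]]].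
  rewrite length_app, Hl in Hble, Hbeq. simpl in Hble, Hbeq.
  assert (Hb0 : 0 < length b).
  { destruct b as [|? ?]; [|simpl; lia]. exfalso. apply Hg.
    assert (Hg1 : g = gone G).
    { apply gen_nil, (proj2 (Eb g)), gen_list_app_r, gen_mem. left. reflexivity. }
    rewrite Hg1. apply subgroup1, HM. }
  assert (Hkb : k <= length b).
  { apply (is_mu_le G (join_elt M g) H); [exact Hk | exact Hb0|].
    exists (gen_list b). split; [exists b; split; [reflexivity | split; [exact Hb | intros x; tauto]]|].
    split; intros x Hx.
    - apply (gen_list_join l HlM), (proj1 (Eb x)), Hx.
    - apply (proj2 (Eb x)), HHl, Hx. }
  split; [lia|]. intros Hkm. exists l. split; [exact Hl | split; [exact HlM | split; [exact HDl|]]].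
  apply Hbeq. lia.
Qed.

Lemma is_mu_join : is_mu (join_elt M g) D m.
Proof.
  apply is_mu_restrict; [exact Hmu|].
  destruct (fin_subset_in_free [] (fun k (h : In k []) => match h with end))
    as [l [Hl [Hfl [HlM [HDl _]]]]].
  exists (gen_list l). split; [exists l; split; [exact Hl | split; [exact Hfl | intros x; tauto]]|].
  split; [intros x Hx; apply gen_mem; left; apply HlM, Hx | exact HDl].
Qed.

End Extension.

Lemma eval_word_app_basis (X : group) (l l' : list X) w :
  word_over (length l) w -> eval_word X (l ++ l') w = eval_word X l w.
Proof.
  induction w as [|a w IH]; intros Hw; simpl; [reflexivity|].
  rewrite IH by (intros c Hc; apply Hw; right; exact Hc).
  unfold letter. rewrite app_nth1 by (apply Hw; left; reflexivity). reflexivity.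
Qed.

Lemma free_basis_app_l (X : group) (l l' : list X) : free_basis (l ++ l') -> free_basis l.
Proof.
  intros Hf w Hw Hr Hbw. rewrite <- (eval_word_app_basis X l l') by exact Hbw.
  apply Hf; [exact Hw | exact Hr|]. intros a Ha. rewrite length_app. specialize (Hbw a Ha). lia.
Qed.

Lemma reduced_app (w1 w2 : word) : reduced w1 -> reduced w2 ->
  (forall a b w', In a w1 -> w2 = b :: w' -> fst a <> fst b) -> reduced (w1 ++ w2).
Proof.
  induction w1 as [|a [|a' w1] IH]; intros H1 H2 Hsep; simpl; [exact H2| |].
  - destruct w2 as [|b w2]; [exact I|]. split; [|exact H2].
    intros [E _]. exact (Hsep a b w2 (or_introl eq_refl) eq_refl E).
  - destruct H1 as [Hn H1]. split; [exact Hn|].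
    apply IH; [exact H1 | exact H2|]. intros c b w' Hc E. apply (Hsep c b w'); [right|]; assumption.
Qed.

Definition rename_letter (i : nat) (a : nat * bool) := (i, snd a).

Lemma reduced_rename i (w : word) : word_over 1 w -> reduced w ->
  reduced (map (rename_letter i) w).
Proof.
  induction w as [|a [|b w] IH]; intros Hw Hr; simpl; [exact I | exact I|].
  destruct Hr as [Hn Hr]. split.
  - intros [_ Hs]. apply Hn. split; [|exact Hs].
    assert (fst a < 1) by (apply Hw; left; reflexivity).
    assert (fst b < 1) by (apply Hw; right; left; reflexivity). lia.
  - apply IH; [intros c Hc; apply Hw; right; exact Hc | exact Hr].
Qed.

Lemma eval_word_rename (X : group) (l : list X) g (w : word) : word_over 1 w ->
  eval_word X (l ++ [g]) (map (rename_letter (length l)) w) = eval_word X [g] w.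
Proof.
  induction w as [|a w IH]; intros Hw; simpl; [reflexivity|].
  rewrite IH by (intros c Hc; apply Hw; right; exact Hc). f_equal.
  assert (fst a = 0) by (assert (fst a < 1) by (apply Hw; left; reflexivity); lia).
  unfold letter, rename_letter; simpl. rewrite app_nth2, Nat.sub_diag by lia.
  destruct a as [[|?] ?]; [reflexivity | discriminate].
Qed.

Section FreeProduct.
Variables (G : group) (l : list G) (g : G).
Hypothesis l_g_free : free_basis (l ++ [g]).

(* Letters [x_i] with [i < length l] spell elements of [gen_list l]; the letter
   [length l] spells powers of [g]. *)
Definition spells_factor (t : bool) (a : nat * bool) := fst a < length l <-> t = true.

Lemma factor_word (t : bool) x : (if t then gen_list l x else cyclic g x) -> x <> gone G ->
  exists w, w <> [] /\ word_over (S (length l)) w /\ reduced w /\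
    eval_word G (l ++ [g]) w = x /\ forall a, In a w -> spells_factor t a.
Proof.
  intros Hx Hne. unfold spells_factor. destruct t.
  - destruct (gen_reduced_word G l x Hx) as [w [Bw [Rw <-]]].
    exists w. split; [intros ->; apply Hne; reflexivity|].
    split; [intros a Ha; specialize (Bw a Ha); lia|].
    split; [exact Rw | split; [apply eval_word_app_basis, Bw|]].
    intros a Ha. specialize (Bw a Ha). tauto.
  - assert (Hx' : gen_list [g] x) by (revert Hx; apply gen_mono; intros y ->; left; reflexivity).
    destruct (gen_reduced_word G [g] x Hx') as [w [Bw [Rw <-]]].
    exists (map (rename_letter (length l)) w). split; [|split; [|split; [|split]]].
    + intros E. apply map_eq_nil in E. subst w. apply Hne. reflexivity.
    + intros a Ha. apply in_map_iff in Ha. destruct Ha as [c [<- _]]. simpl. lia.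
    + apply reduced_rename; assumption.
    + apply eval_word_rename, Bw.
    + intros a Ha. apply in_map_iff in Ha. destruct Ha as [c [<- _]]. simpl.
      split; [lia | discriminate].
Qed.

Lemma alternating_word s : alternating (gen_list l) (cyclic g) s ->
  exists w, word_over (S (length l)) w /\ reduced w /\
    eval_word G (l ++ [g]) w = prod_seq G s /\
    match s with
    | [] => w = []
    | (t, _) :: _ => exists a w', w = a :: w' /\ spells_factor t a
    end.
Proof.
  induction s as [|[t x] s IH]; intros Hs.
  - exists []. split; [intros a [] | repeat split].
  - destruct Hs as [Hx [Hne [Ht Hs]]].
    destruct (IH Hs) as [w' [B' [R' [E' H']]]].
    destruct (factor_word t x Hx Hne) as [w [Hw [Bw [Rw [Ew Cw]]]]].
    exists (w ++ w'). split; [|split; [|split]].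
    + apply word_over_app; assumption.
    + apply reduced_app; [exact Rw | exact R'|].
      intros a b w'' Ha Eb Efst.
      destruct s as [|[t' x'] s]; [subst w'; discriminate|].
      destruct H' as [a0 [w0 [E0 C0]]]. rewrite Eb in E0. injection E0 as -> ->.
      specialize (Cw a Ha). unfold spells_factor in *. rewrite Efst in Cw.
      apply Ht. destruct t, t'; intuition congruence.
    + simpl. rewrite eval_word_app, Ew, E'. reflexivity.
    + destruct w as [|a w]; [congruence|]. exists a, (w ++ w').
      split; [reflexivity | apply Cw; left; reflexivity].
Qed.

Lemma free_product_of_free_basis : gen_free_product (gen_list l) (cyclic g).
Proof.
  intros s Hne Hs E. destruct (alternating_word s Hs) as [w [Bw [Rw [Ew Hw]]]].
  destruct s as [|[t x] s]; [congruence|]. destruct Hw as [a [w' [-> _]]].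
  apply (l_g_free (a :: w')); [discriminate | exact Rw | |].
  - intros c Hc. rewrite length_app. simpl. specialize (Bw c Hc). lia.
  - rewrite Ew. exact E.
Qed.

End FreeProduct.

Theorem lemma2p1 (G : group) (D M : G -> Prop) (m : nat) (g : G)
  (r : option nat) :
  locally_free G ->
  fin_gen D -> is_mu (fun _ => True) D m ->
  is_subgroup M -> subset D M -> rank_of M (Some m) ->
  ~ M g ->
  rank_of (join_elt M g) r ->
  rank_gt r m ->
  r = Some (S m) /\
  exists F : G -> Prop,
    free_of_rank F m /\ subset F M /\ subset D F /\
    gen_free_product F (cyclic g).
Proof.
  intros LF HD Hmu HM HDM HrM Hg Hr Hgt.
  pose proof (mu_join_bound G D M m g LF HD Hmu HM HDM HrM Hg) as Hbound.
  destruct (rank_gt_witness G (join_elt M g) r m Hr Hgt) as [H [k [HHfg [HHM [Hk Hmk]]]]].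
  { exists D. split; [exact HD | split; [|exact (is_mu_join G D M m g LF HD Hmu HM HDM HrM)]].
    intros x Hx. apply gen_mem. left. apply HDM, Hx. }
  destruct (Hbound H k HHfg HHM Hk) as [Hkm Hfree].
  assert (Ek : k = S m) by lia. subst k.
  split.
  - apply (rank_of_max G (join_elt M g) r (S m) Hr); [|exists H; auto].
    intros H' k' HH' HH'M Hk'. apply (Hbound H' k' HH' HH'M Hk').
  - destruct (Hfree eq_refl) as [l [Hl [HlM [HDl Hlg]]]].
    exists (gen_list l). split; [|split; [exact HlM | split; [exact HDl|]]].
    + exists l. split; [exact Hl | split; [apply (free_basis_app_l G l [g] Hlg) | intros x; tauto]].
    + apply free_product_of_free_basis, Hlg.
Qed.
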